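(* Let $P$ be an NL poset on $X_n$. For any NL poset $P'$ on $X_{n+1}$ whose restriction to $X_n$ is $P$, there is a unique order ideal $S$ of $P$ such that $\mathrm{Grow}_S(\mathcal I(P))=\mathcal I(P')$.
   Context: Let $X_n=\{0,1,\ldots,n-1\}$. A naturally labeled (NL) poset on $X_n$ is a partial order $\preceq$ on $X_n$ such that $x\preceq y$ implies $x\le y$ in the usual integer order. $\mathcal I(P)$ denotes the set of order ideals (downward closed subsets) of $P$. For a family $T$ of subsets of $X_n$ (closed under union and intersection, containing $\emptyset$ and $X_n$) and $S\in T$, $\mathrm{Grow}_S(T)=T\cup\{U\cup\{n\}: U\in T,\ S\subseteq U\}$, a family of subsets of $X_{n+1}$. *)

(* X_n = {0,...,n-1} is represented by the ordinal type 'I_n. *)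
From mathcomp Require Import all_boot.
Set Implicit Arguments. Unset Strict Implicit. Unset Printing Implicit Defensive.

Definition NL_poset (n : nat) (R : rel 'I_n) : Prop :=
  [/\ reflexive R, antisymmetric R, transitive R &
      forall x y : 'I_n, R x y -> (x <= y)%N].

Definition order_ideal (n : nat) (R : rel 'I_n) (U : {set 'I_n}) : bool :=
  [forall x, forall y, ((y \in U) && R x y) ==> (x \in U)].

Definition ideals (n : nat) (R : rel 'I_n) : {set {set 'I_n}} :=
  [set U | order_ideal R U].

Definition incl (n : nat) : 'I_n -> 'I_n.+1 := widen_ord (leqnSn n).

Definition liftS (n : nat) (U : {set 'I_n}) : {set 'I_n.+1} := @incl n @: U.

(* Grow_S(T) = T ∪ { U ∪ {n} : U ∈ T, S ⊆ U }, as a family of subsets of X_{n+1}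
   (ord_max is the element n of 'I_n.+1). *)
Definition Grow (n : nat) (S : {set 'I_n}) (T : {set {set 'I_n}})
  : {set {set 'I_n.+1}} :=
  (@liftS n @: T) :|: [set ord_max |: liftS U | U in T & S \subset U].

Definition restricts_to (n : nat) (P' : rel 'I_n.+1) (P : rel 'I_n) : Prop :=
  forall x y : 'I_n, P' (@incl n x) (@incl n y) = P x y.

From mathcomp Require Import all_boot.
Set Implicit Arguments. Unset Strict Implicit. Unset Printing Implicit Defensive.

(* A subset V of X_{n+1} is determined by whether n is in V and by its trace
   on X_n; in these terms V is in Grow_S(T) iff its trace is in T and, when
   n is in V, contains S.  For an NL extension P' of P the order ideals of P'
   are described the same way with S the set of x below n in P' (no element
   lies above n, since n is the largest label), so I(P') = Grow_S(I(P)).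
   Uniqueness holds for any family T: S is the least trace of a member of
   Grow_S(T) containing n. *)

Lemma order_idealP (n : nat) (R : rel 'I_n) (U : {set 'I_n}) :
  reflect (forall x y, y \in U -> R x y -> x \in U) (order_ideal R U).
Proof.
apply: (iffP forallP) => [HU x y yU Rxy | HU x].
  by have /forallP /(_ y) := HU x; rewrite yU Rxy.
by apply/forallP => y; apply/implyP => /andP [yU Rxy]; apply: HU Rxy.
Qed.

Section LiftSubsets.

Variable n : nat.
Implicit Types (U : {set 'I_n}) (V : {set 'I_n.+1}).

Definition unliftS V : {set 'I_n} := [set x | incl x \in V].

Lemma incl_inj : injective (@incl n).
Proof. by move=> x y /(congr1 val) /= eq_xy; apply: val_inj. Qed.

Lemma incl_neq_max (x : 'I_n) : (incl x == ord_max) = false.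
Proof. by apply/negbTE/eqP => /(congr1 val) /= eq_xn; have := ltn_ord x; rewrite eq_xn ltnn. Qed.

Lemma ord_maxVincl (y : 'I_n.+1) : y = ord_max \/ exists x, y = incl x.
Proof.
have [lt_yn | ge_yn] := ltnP y n; first by right; exists (Ordinal lt_yn); apply: val_inj.
by left; apply: val_inj => /=; apply/eqP; rewrite eqn_leq ge_yn -ltnS ltn_ord.
Qed.

Lemma mem_liftS U x : (incl x \in liftS U) = (x \in U).
Proof. exact: (mem_imset _ _ incl_inj). Qed.

Lemma max_notin_liftS U : ord_max \notin liftS U.
Proof. by apply/imsetP => -[x _ /eqP]; rewrite eq_sym incl_neq_max. Qed.

Lemma liftSK : cancel (@liftS n) unliftS.
Proof. by move=> U; apply/setP => x; rewrite inE mem_liftS. Qed.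

Lemma unliftS_setU1max U : unliftS (ord_max |: liftS U) = U.
Proof. by apply/setP => x; rewrite inE in_setU1 incl_neq_max mem_liftS. Qed.

Lemma liftS_unliftS V :
  V = (if ord_max \in V then ord_max |: liftS (unliftS V) else liftS (unliftS V)).
Proof.
apply/setP => y; have [->|[x ->]] := ord_maxVincl y.
  by case: ifP => maxV; rewrite ?setU11 ?maxV ?(negbTE (max_notin_liftS _)).
by case: ifP => _; rewrite ?in_setU1 ?incl_neq_max mem_liftS inE.
Qed.

Lemma mem_Grow (S : {set 'I_n}) (T : {set {set 'I_n}}) V :
  (V \in Grow S T) = (unliftS V \in T) && ((ord_max \in V) ==> (S \subset unliftS V)).
Proof.
apply/setUP/andP => [[] /imsetP [U]|[VT SV]].
- by move=> UT ->; rewrite liftSK (negbTE (max_notin_liftS _)).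
- by rewrite inE => /andP [UT SU] ->; rewrite unliftS_setU1max setU11.
rewrite (liftS_unliftS V); case: ifP => maxV; last by left; apply: imset_f.
by right; apply/imsetP; exists (unliftS V); rewrite // inE VT (implyP SV).
Qed.

Lemma Grow_inj (T : {set {set 'I_n}}) (S1 S2 : {set 'I_n}) :
  S1 \in T -> S2 \in T -> Grow S1 T = Grow S2 T -> S1 = S2.
Proof.
suff sub_Grow : forall S S', S \in T -> Grow S T = Grow S' T -> S' \subset S.
  by move=> S1T S2T eq12; apply/eqP; rewrite eqEsubset (sub_Grow _ _ S1T eq12) sub_Grow.
move=> S S' ST eqSS'; have : ord_max |: liftS S \in Grow S T.
  by rewrite mem_Grow unliftS_setU1max setU11 ST subxx.
by rewrite eqSS' mem_Grow unliftS_setU1max setU11 => /andP [].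
Qed.

End LiftSubsets.

Section NaturalExtension.

Variables (n : nat) (P : rel 'I_n) (P' : rel 'I_n.+1).
Hypothesis P'_trans : transitive P'.
Hypothesis P'_natural : forall x y, P' x y -> (x <= y)%N.
Hypothesis P'_restr : restricts_to P' P.

Definition down_max : {set 'I_n} := [set x | P' (incl x) ord_max].

Lemma down_max_ideal : down_max \in ideals P.
Proof.
rewrite inE; apply/order_idealP => x y; rewrite !inE => Pyn Pxy.
by apply: P'_trans Pyn; rewrite P'_restr.
Qed.

Lemma order_ideal_ext (V : {set 'I_n.+1}) :
  order_ideal P' V =
  order_ideal P (unliftS V) && ((ord_max \in V) ==> (down_max \subset unliftS V)).
Proof.
apply/order_idealP/andP => [HV | [/order_idealP HU down_sub] x y].
  split; first by apply/order_idealP => x y; rewrite !inE -P'_restr; apply: HV.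
  by apply/implyP => maxV; apply/subsetP => x; rewrite !inE; apply: HV.
have [->|[y' ->]] := ord_maxVincl y; have [->|[x' ->]] := ord_maxVincl x => //.
- by move=> maxV Pxn; have := subsetP (implyP down_sub maxV) x'; rewrite !inE; apply.
- by move=> _ /P'_natural /=; rewrite leqNgt ltn_ord.
by rewrite P'_restr => yV Pxy; have := HU x' y'; rewrite !inE; apply.
Qed.

Lemma ideals_ext : Grow down_max (ideals P) = ideals P'.
Proof. by apply/setP => V; rewrite mem_Grow !inE order_ideal_ext. Qed.

End NaturalExtension.

Theorem theorem5p10 (n : nat) (P : rel 'I_n) (P' : rel 'I_n.+1) :
  NL_poset P -> NL_poset P' -> restricts_to P' P ->
  exists! S : {set 'I_n}, S \in ideals P /\ Grow S (ideals P) = ideals P'.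
Proof.
move=> _ [_ _ P'_trans P'_natural] P'_restr.
have downI := down_max_ideal P'_trans P'_restr.
have growE := ideals_ext P'_natural P'_restr.
exists (down_max P'); split=> // S [SI growS].
by apply: Grow_inj downI SI _; rewrite growE growS.
Qed.
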